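(* Let $\mathcal C=(A,\bar A,B,\bar B,C,\bar C,D,\bar D,E,\bar E,F,\bar F)$ be a coefficient tuple and $\mathcal W=(Q,\bar Q,S,\bar S,R,\bar R,G,\bar G)$ a weight tuple satisfying Assumption (S); let $\mathcal C_1,\mathcal W_1$ be as in the context. Then: (1) the first Riccati equation (for $P$) of $\mathrm{Ric}(\mathcal C_1,\mathcal W_1)$ is the same equation as the first Riccati equation of $\mathrm{Ric}(\mathcal C,\mathcal W)$; (2) the second Riccati equation (for $\Pi$) of $\mathrm{Ric}(\mathcal C_1,\mathcal W_1)$ is the same equation as the second Riccati equation of $\mathrm{Ric}(\mathcal C,\mathcal W)$. That is, the terminal conditions coincide and, for every $t$ and every $P_t,\Pi_t\in\mathbb S^n$ for which $\Sigma_{0t}$ and $\Sigma_{1t}$ are invertible, the corresponding left-hand side expressions coincide.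
   Context: Fix $T>0$, integers $n,m\ge1$, a nonempty $\Theta\subseteq\mathbb R\setminus\{0\}$ and a $\sigma$-finite measure $\nu$ on $\Theta$ with $\int_\Theta(1\wedge\theta^2)\nu(d\theta)<\infty$. $\mathbb S^k$: symmetric $k\times k$ matrices; $M\ge\alpha I$ means $M-\alpha I$ positive semidefinite. $L^\infty(0,T;M)$: bounded functions; $L^2_\nu(M)$: deterministic $r:[0,T]\times\Theta\to M$ with $\sup_t\int_\Theta|r(t,\theta)|^2\nu(d\theta)<\infty$. A coefficient tuple $\mathcal C=(A,\bar A,B,\bar B,C,\bar C,D,\bar D,E,\bar E,F,\bar F)$: deterministic $A,\bar A,C,\bar C\in L^\infty(0,T;\mathbb R^{n\times n})$, $B,\bar B,D,\bar D\in L^\infty(0,T;\mathbb R^{n\times m})$, $E,\bar E\in L^2_\nu(\mathbb R^{n\times n})$, $F,\bar F\in L^2_\nu(\mathbb R^{n\times m})$. A weight tuple $\mathcal W=(Q,\bar Q,S,\bar S,R,\bar R,G,\bar G)$: $Q,\bar Q\in L^\infty(0,T;\mathbb S^n)$, $R,\bar R\in L^\infty(0,T;\mathbb S^m)$, $S,\bar S\in L^\infty(0,T;\mathbb R^{n\times m})$, $G,\bar G\in\mathbb S^n$. Riccati system $\mathrm{Ric}(\mathcal C,\mathcal W)$: for deterministic $P,\Pi:[0,T]\to\mathbb S^n$, with $\Sigma_{0t}=R_t+D_t^\top P_tD_t+\int_\Theta F_{t,\theta}^\top P_tF_{t,\theta}\nu(d\theta)$, $\Sigma_{1t}=R_t+\bar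 R_t+(D_t+\bar D_t)^\top P_t(D_t+\bar D_t)+\int_\Theta(F_{t,\theta}+\bar F_{t,\theta})^\top P_t(F_{t,\theta}+\bar F_{t,\theta})\nu(d\theta)$: $\dot P_t+P_tA_t+A_t^\top P_t+C_t^\top P_tC_t+\int_\Theta E_{t,\theta}^\top P_tE_{t,\theta}\nu(d\theta)+Q_t-\big(S_t+P_tB_t+C_t^\top P_tD_t+\int_\Theta E_{t,\theta}^\top P_tF_{t,\theta}\nu(d\theta)\big)\Sigma_{0t}^{-1}\big(S_t^\top+B_t^\top P_t+D_t^\top P_tC_t+\int_\Theta F_{t,\theta}^\top P_tE_{t,\theta}\nu(d\theta)\big)=0$, $P_T=G$; $\dot\Pi_t+\Pi_t(A_t+\bar A_t)+(A_t+\bar A_t)^\top\Pi_t+(C_t+\bar C_t)^\top P_t(C_t+\bar C_t)+\int_\Theta(E_{t,\theta}+\bar E_{t,\theta})^\top P_t(E_{t,\theta}+\bar E_{t,\theta})\nu(d\theta)+Q_t+\bar Q_t-\big[(S_t+\bar S_t)+\Pi_t(B_t+\bar B_t)+(C_t+\bar C_t)^\top P_t(D_t+\bar D_t)+\int_\Theta(E_{t,\theta}+\bar E_{t,\theta})^\top P_t(F_{t,\theta}+\bar F_{t,\theta})\nu(d\theta)\big]\Sigma_{1t}^{-1}\big[(S_t+\bar S_t)^\top+(B_t+\bar B_t)^\top\Pi_t+(D_t+\bar D_t)^\top P_t(C_t+\bar C_t)+\int_\Theta(F_{t,\theta}+\bar F_{t,\theta})^\top P_t(E_{t,\theta}+\bar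 E_{t,\theta})\nu(d\theta)\big]=0$, $\Pi_T=G+\bar G$. Assumption (S) for $\mathcal W$: there is $\alpha_0>0$ such that for all $t$: $R_t\ge\alpha_0I$, $R_t+\bar R_t\ge\alpha_0I$, $Q_t-S_tR_t^{-1}S_t^\top\ge0$, $Q_t+\bar Q_t-(S_t+\bar S_t)(R_t+\bar R_t)^{-1}(S_t+\bar S_t)^\top\ge0$, $G\ge0$, $G+\bar G\ge0$. Under Assumption (S), define $A_1=A-BR^{-1}S^\top$, $\bar A_1=A+\bar A-(B+\bar B)(R+\bar R)^{-1}(S+\bar S)^\top-A_1$, $C_1=C-DR^{-1}S^\top$, $\bar C_1=C+\bar C-(D+\bar D)(R+\bar R)^{-1}(S+\bar S)^\top-C_1$, $E_{1t,\theta}=E_{t,\theta}-F_{t,\theta}R_t^{-1}S_t^\top$, $\bar E_{1t,\theta}=E_{t,\theta}+\bar E_{t,\theta}-(F_{t,\theta}+\bar F_{t,\theta})(R_t+\bar R_t)^{-1}(S_t+\bar S_t)^\top-E_{1t,\theta}$, $Q_1=Q-SR^{-1}S^\top$, $\bar Q_1=Q+\bar Q-(S+\bar S)(R+\bar R)^{-1}(S+\bar S)^\top-Q_1$; $\mathcal C_1=(A_1,\bar A_1,B,\bar B,C_1,\bar C_1,D,\bar D,E_1,\bar E_1,F,\bar F)$ and $\mathcal W_1=(Q_1,\bar Q_1,0,0,R,\bar R,G,\bar G)$. *)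

From HB Require Import structures.
From mathcomp Require Import all_boot all_order all_algebra.
From mathcomp Require Import all_classical all_reals all_analysis.
Set Implicit Arguments. Unset Strict Implicit. Unset Printing Implicit Defensive.
Import Order.TTheory GRing.Theory Num.Theory.
Local Open Scope classical_set_scope.
Local Open Scope ring_scope.

Section Defs.
Variable R : realType.

Definition symmx k (M : 'M[R]_k) : Prop := M^T = M.
Definition psdmx k (M : 'M[R]_k) : Prop :=
  forall v : 'cV[R]_k, 0 <= (v^T *m M *m v) ord0 ord0.
Definition mx_ge_scalar k (M : 'M[R]_k) (a : R) : Prop := psdmx (M - a%:M).

Definition sqnorm k l (M : 'M[R]_(k, l)) : R := \sum_i \sum_j (M i j) ^+ 2.

Definition mx_bounded (T : R) k l (f : R -> 'M[R]_(k, l)) : Prop :=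
  exists K : R, forall t, 0 <= t <= T -> forall i j, `|f t i j| <= K.

Definition mxint (nu : {measure set R -> \bar R}) (Th : set R) k l
  (f : R -> 'M[R]_(k, l)) : 'M[R]_(k, l) :=
  \matrix_(i, j) Rintegral nu Th (fun th => f th i j).

Definition L2nu (T : R) (nu : {measure set R -> \bar R}) (Th : set R) k l
  (r : R -> R -> 'M[R]_(k, l)) : Prop :=
  (forall t, 0 <= t <= T -> forall i j, measurable_fun Th (fun th => r t th i j))
  /\ exists K : R, forall t, 0 <= t <= T ->
       (\int[nu]_(th in Th) (sqnorm (r t th))%:E <= K%:E)%E.

Definition levy_setting (nu : {measure set R -> \bar R}) (Th : set R) : Prop :=
  [/\ measurable Th, Th !=set0, ~ Th 0, sigma_finite Th nu &
      (\int[nu]_(th in Th) (Num.min 1 (th ^+ 2))%:E < +oo)%E].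
End Defs.

Record coef (R : realType) (n m : nat) := Coef {
  cA : R -> 'M[R]_n; cAb : R -> 'M[R]_n;
  cB : R -> 'M[R]_(n, m); cBb : R -> 'M[R]_(n, m);
  cC : R -> 'M[R]_n; cCb : R -> 'M[R]_n;
  cD : R -> 'M[R]_(n, m); cDb : R -> 'M[R]_(n, m);
  cE : R -> R -> 'M[R]_n; cEb : R -> R -> 'M[R]_n;
  cF : R -> R -> 'M[R]_(n, m); cFb : R -> R -> 'M[R]_(n, m) }.

Record weight (R : realType) (n m : nat) := Weight {
  wQ : R -> 'M[R]_n; wQb : R -> 'M[R]_n;
  wS : R -> 'M[R]_(n, m); wSb : R -> 'M[R]_(n, m);
  wR : R -> 'M[R]_m; wRb : R -> 'M[R]_m;
  wG : 'M[R]_n; wGb : 'M[R]_n }.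

Section Ric.
Variables (R : realType) (n m : nat) (T : R).
Variables (nu : {measure set R -> \bar R}) (Th : set R).
Local Open Scope ring_scope.

Definition coef_adm (c : coef R n m) : Prop :=
  [/\ [/\ mx_bounded T (cA c), mx_bounded T (cAb c), mx_bounded T (cB c) &
      mx_bounded T (cBb c)], [/\ mx_bounded T (cC c), mx_bounded T (cCb c),
      mx_bounded T (cD c) & mx_bounded T (cDb c)] &
   [/\ L2nu T nu Th (cE c), L2nu T nu Th (cEb c),
       L2nu T nu Th (cF c) & L2nu T nu Th (cFb c)]].

Definition weight_adm (w : weight R n m) : Prop :=
  [/\ (forall t, 0 <= t <= T -> [/\ symmx (wQ w t), symmx (wQb w t),
                                   symmx (wR w t) & symmx (wRb w t)]),
      [/\ mx_bounded T (wQ w), mx_bounded T (wQb w), mx_bounded T (wS w) &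
      mx_bounded T (wSb w)], mx_bounded T (wR w), mx_bounded T (wRb w) &
      symmx (wG w) /\ symmx (wGb w)].

Definition assumptionS (w : weight R n m) : Prop :=
  exists2 a0 : R, 0 < a0 &
  (forall t, 0 <= t <= T ->
    [/\ mx_ge_scalar (wR w t) a0, mx_ge_scalar (wR w t + wRb w t) a0,
        psdmx (wQ w t - wS w t *m invmx (wR w t) *m (wS w t)^T) &
        psdmx (wQ w t + wQb w t - (wS w t + wSb w t)
                 *m invmx (wR w t + wRb w t) *m (wS w t + wSb w t)^T)])
  /\ psdmx (wG w) /\ psdmx (wG w + wGb w).

Definition ricSigma0 (c : coef R n m) (w : weight R n m) t (P : 'M[R]_n) : 'M[R]_m :=
  wR w t + (cD c t)^T *m P *m cD c t
  + mxint nu Th (fun th => (cF c t th)^T *m P *m cF c t th).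

Definition ricSigma1 (c : coef R n m) (w : weight R n m) t (P : 'M[R]_n) : 'M[R]_m :=
  wR w t + wRb w t + (cD c t + cDb c t)^T *m P *m (cD c t + cDb c t)
  + mxint nu Th (fun th => (cF c t th + cFb c t th)^T *m P
                            *m (cF c t th + cFb c t th)).

(** left-hand side of the first Riccati equation, dP standing for \dot P_t *)
Definition ric1_lhs (c : coef R n m) (w : weight R n m) t (P dP : 'M[R]_n)
  : 'M[R]_n :=
  dP + P *m cA c t + (cA c t)^T *m P + (cC c t)^T *m P *m cC c t
  + mxint nu Th (fun th => (cE c t th)^T *m P *m cE c t th) + wQ w t
  - (wS w t + P *m cB c t + (cC c t)^T *m P *m cD c t
     + mxint nu Th (fun th => (cE c t th)^T *m P *m cF c t th))
    *m invmx (ricSigma0 c w t P)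
    *m ((wS w t)^T + (cB c t)^T *m P + (cD c t)^T *m P *m cC c t
        + mxint nu Th (fun th => (cF c t th)^T *m P *m cE c t th)).

Definition ric1_terminal (w : weight R n m) : 'M[R]_n := wG w.

(** left-hand side of the second Riccati equation, dPi standing for \dot Pi_t *)
Definition ric2_lhs (c : coef R n m) (w : weight R n m) t (P Pi dPi : 'M[R]_n)
  : 'M[R]_n :=
  let AA := cA c t + cAb c t in
  let BB := cB c t + cBb c t in
  let CC := cC c t + cCb c t in
  let DD := cD c t + cDb c t in
  let EE := fun th => cE c t th + cEb c t th in
  let FF := fun th => cF c t th + cFb c t th in
  let SS := wS w t + wSb w t in
  dPi + Pi *m AA + AA^T *m Pi + CC^T *m P *m CC
  + mxint nu Th (fun th => (EE th)^T *m P *m EE th) + (wQ w t + wQb w t)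
  - (SS + Pi *m BB + CC^T *m P *m DD
     + mxint nu Th (fun th => (EE th)^T *m P *m FF th))
    *m invmx (ricSigma1 c w t P)
    *m (SS^T + BB^T *m Pi + DD^T *m P *m CC
        + mxint nu Th (fun th => (FF th)^T *m P *m EE th)).

Definition ric2_terminal (w : weight R n m) : 'M[R]_n := wG w + wGb w.

Definition ric_coef1 (c : coef R n m) (w : weight R n m) : coef R n m :=
  let Ri t := invmx (wR w t) in
  let RRi t := invmx (wR w t + wRb w t) in
  let SS t := wS w t + wSb w t in
  let A1 t := cA c t - cB c t *m Ri t *m (wS w t)^T in
  let C1 t := cC c t - cD c t *m Ri t *m (wS w t)^T in
  let E1 t th := cE c t th - cF c t th *m Ri t *m (wS w t)^T in
  Coef
    A1
    (fun t => cA c t + cAb c t - (cB c t + cBb c t) *m RRi t *m (SS t)^T - A1 t)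
    (cB c) (cBb c)
    C1
    (fun t => cC c t + cCb c t - (cD c t + cDb c t) *m RRi t *m (SS t)^T - C1 t)
    (cD c) (cDb c)
    E1
    (fun t th => cE c t th + cEb c t th
                 - (cF c t th + cFb c t th) *m RRi t *m (SS t)^T - E1 t th)
    (cF c) (cFb c).

Definition ric_weight1 (w : weight R n m) : weight R n m :=
  let Q1 t := wQ w t - wS w t *m invmx (wR w t) *m (wS w t)^T in
  Weight
    Q1
    (fun t => wQ w t + wQb w t - (wS w t + wSb w t)
                *m invmx (wR w t + wRb w t) *m (wS w t + wSb w t)^T - Q1 t)
    (fun _ => 0) (fun _ => 0) (wR w) (wRb w) (wG w) (wGb w).
End Ric.

From HB Require Import structures.
From mathcomp Require Import all_boot all_order all_algebra.
From mathcomp Require Import all_classical all_reals all_analysis.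
From mathcomp Require Import measurable_realfun ring lra.
Set Implicit Arguments. Unset Strict Implicit. Unset Printing Implicit Defensive.
Import Order.TTheory GRing.Theory Num.Theory.
Local Open Scope classical_set_scope.
Local Open Scope ring_scope.

(* Both Riccati equations are instances of one operator H - L Sg^-1 M with
   Sg = R + D^T P D + \int F^T P F, where H, L, M collect the remaining terms.
   Replacing A, C, E by A - B X, C - D X, E - F X, Q by Q - S X and S by 0,
   for the feedback gain X = R^-1 S^T, leaves Sg unchanged and turns (H, L, M)
   into (H - L X - X^T M + X^T Sg X, L - X^T Sg, M - Sg X); completing the
   square shows that H - L Sg^-1 M is invariant.  The jump integrals follow
   this substitution linearly because the entries of E and F are square
   integrable, so every product occurring in them is integrable.
   Assumption (S) enters only through the invertibility of R and R + Rb. *)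

Lemma addmxE (R : nmodType) k l (A B : 'M[R]_(k, l)) i j :
  (A + B) i j = A i j + B i j.
Proof. by rewrite mxE. Qed.

Lemma oppmxE (R : zmodType) k l (A : 'M[R]_(k, l)) i j : (- A) i j = - A i j.
Proof. by rewrite mxE. Qed.

(* Entrywise [ring], with the entries of matrix products kept as atoms. *)
Ltac mx_additive_ring := apply/matrixP => ? ?; rewrite ?(addmxE, oppmxE); ring.

Section RiccatiForm.
Variables (R : comUnitRingType) (k l : nat).

Lemma schur_complement_feedback (H : 'M[R]_k) (L : 'M[R]_(k, l))
    (M X : 'M[R]_(l, k)) (Sg : 'M[R]_l) : Sg \in unitmx ->
  (H - L *m X - X^T *m M + X^T *m Sg *m X)
    - (L - X^T *m Sg) *m invmx Sg *m (M - Sg *m X)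
  = H - L *m invmx Sg *m M.
Proof.
move=> uSg.
have SgK p (Y : 'M[R]_(p, l)) : Y *m Sg *m invmx Sg = Y.
  by rewrite -mulmxA mulmxV ?mulmx1.
have SgVK p (Y : 'M[R]_(p, l)) : Y *m invmx Sg *m Sg = Y.
  by rewrite -mulmxA mulVmx ?mulmx1.
rewrite !mulmxBl !mulmxBr !mulmxA !SgK !SgVK.
mx_additive_ring.
Qed.

Definition riccati_form (dP P1 P A : 'M[R]_k) (B : 'M[R]_(k, l)) (C : 'M[R]_k)
    (D : 'M[R]_(k, l)) (Q : 'M[R]_k) (S : 'M[R]_(k, l)) (Rm : 'M[R]_l)
    (Iee : 'M[R]_k) (Ief : 'M[R]_(k, l)) (Ife : 'M[R]_(l, k)) (Iff : 'M[R]_l)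
    : 'M[R]_k :=
  dP + P1 *m A + A^T *m P1 + C^T *m P *m C + Iee + Q
  - (S + P1 *m B + C^T *m P *m D + Ief) *m invmx (Rm + D^T *m P *m D + Iff)
    *m (S^T + B^T *m P1 + D^T *m P *m C + Ife).

Lemma riccati_form_feedback dP P1 P A B C D Q S Rm Iee Ief Ife Iff
    (X : 'M[R]_(l, k)) :
  Rm *m X = S^T -> X^T *m Rm = S -> Rm + D^T *m P *m D + Iff \in unitmx ->
  riccati_form dP P1 P (A - B *m X) B (C - D *m X) D (Q - S *m X) 0 Rm
    (Iee - Ief *m X - X^T *m Ife + X^T *m Iff *m X) (Ief - X^T *m Iff)
    (Ife - Iff *m X) Iff
  = riccati_form dP P1 P A B C D Q S Rm Iee Ief Ife Iff.
Proof.
move=> RX XR uSg; rewrite /riccati_form.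
set Sg := Rm + _ + _.
set L := S + _ + _ + _; set M := S^T + _ + _ + _.
set H := dP + _ + _ + _ + Iee + Q.
have ->: 0 + P1 *m B + (C - D *m X)^T *m P *m D + (Ief - X^T *m Iff)
    = L - X^T *m Sg.
  rewrite add0r /L /Sg linearB /= trmx_mul !(mulmxBl, mulmxDr, mulmxBr) !mulmxA XR.
  mx_additive_ring.
have ->: 0^T + B^T *m P1 + D^T *m P *m (C - D *m X) + (Ife - Iff *m X)
    = M - Sg *m X.
  rewrite trmx0 add0r /M /Sg !(mulmxBr, mulmxDl) !mulmxA RX.
  mx_additive_ring.
rewrite -(schur_complement_feedback H L M X uSg); congr (_ - _).
rewrite /H /L /M /Sg !linearB /= !trmx_mul.
rewrite !(mulmxBl, mulmxDl, mulmxBr, mulmxDr) !mulmxA -[X^T *m Rm *m X]mulmxA RX.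
mx_additive_ring.
Qed.

End RiccatiForm.

Section MatrixIntegral.
Variables (R : realType) (nu : {measure set R -> \bar R}) (Th : set R).
Hypothesis mTh : measurable Th.

Lemma integrable_mul_of_sqr (f g : R -> R) :
  measurable_fun Th f -> measurable_fun Th g ->
  nu.-integrable Th (EFin \o fun x => f x ^+ 2) ->
  nu.-integrable Th (EFin \o fun x => g x ^+ 2) ->
  nu.-integrable Th (EFin \o fun x => f x * g x).
Proof.
move=> mf mg if2 ig2.
apply: (le_integrable mTh _ _ (integrableD mTh if2 ig2)).
  by apply/measurable_EFinP; exact: measurable_funM.
move=> x _ /=; rewrite lee_fin [leRHS]ger0_norm ?addr_ge0 ?sqr_ge0 // normrM.
have := real_normK (num_real (f x)); have := real_normK (num_real (g x)).
have := normr_ge0 (f x); have := normr_ge0 (g x); have := sqr_ge0 (`|f x| - `|g x|).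
nra.
Qed.

Lemma Rintegral_sum p (F : 'I_p -> R -> R) :
  (forall q, nu.-integrable Th (EFin \o F q)) ->
  \int[nu]_(x in Th) (\sum_(q < p) F q x) = \sum_(q < p) \int[nu]_(x in Th) F q x.
Proof.
move=> iF; rewrite /Rintegral.
under eq_integral do rewrite -sumEFin.
rewrite integral_sum // (eq_bigr (fun q => (\int[nu]_(x in Th) F q x)%:E)).
  by rewrite sumEFin.
move=> q _; rewrite fineK //.
exact: (integrable_fin_num mTh (iF q)).
Qed.

Lemma integrable_EFin_sum p (F : 'I_p -> R -> R) :
  (forall q, nu.-integrable Th (EFin \o F q)) ->
  nu.-integrable Th (EFin \o fun x => \sum_(q < p) F q x).
Proof.
move=> iF; have := integrable_sum mTh (index_enum 'I_p) (P := xpredT) (fun q _ => iF q).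
apply: eq_integrable => // x _; by rewrite /= sumEFin.
Qed.

Lemma integrable_EFin_scale (c : R) (f : R -> R) :
  nu.-integrable Th (EFin \o f) -> nu.-integrable Th (EFin \o fun x => c * f x).
Proof. by move=> iF; have := integrableZl mTh c iF; apply: eq_integrable. Qed.

Definition mx_integrable k l (F : R -> 'M[R]_(k, l)) : Prop :=
  forall i j, nu.-integrable Th (EFin \o fun x => F x i j).

Definition mx_sq_integrable k l (F : R -> 'M[R]_(k, l)) : Prop :=
  forall i j, measurable_fun Th (fun x => F x i j) /\
              nu.-integrable Th (EFin \o fun x => F x i j ^+ 2).

Lemma mx_integrableB k l (F G : R -> 'M[R]_(k, l)) :
  mx_integrable F -> mx_integrable G -> mx_integrable (fun x => F x - G x).
Proof.
move=> iF iG i j; have := integrableB mTh (iF i j) (iG i j).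
by apply: eq_integrable => // x _; rewrite /= !mxE.
Qed.

Lemma mx_integrable_mull k l p (M : 'M[R]_(k, l)) (F : R -> 'M[R]_(l, p)) :
  mx_integrable F -> mx_integrable (fun x => M *m F x).
Proof.
move=> iF i j; under eq_fun do rewrite mxE.
by apply: integrable_EFin_sum => q; apply: integrable_EFin_scale.
Qed.

Lemma mx_integrable_mulr k l p (F : R -> 'M[R]_(k, l)) (M : 'M[R]_(l, p)) :
  mx_integrable F -> mx_integrable (fun x => F x *m M).
Proof.
move=> iF i j; under eq_fun do rewrite mxE.
under eq_fun do under eq_bigr do rewrite mulrC.
by apply: integrable_EFin_sum => q; apply: integrable_EFin_scale.
Qed.

Lemma mx_integrable_quad k p q (X : R -> 'M[R]_(k, p)) (Y : R -> 'M[R]_(k, q))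
    (P : 'M[R]_k) :
  mx_sq_integrable X -> mx_sq_integrable Y ->
  mx_integrable (fun x => (X x)^T *m P *m Y x).
Proof.
move=> sX sY i j.
have -> : (fun x => ((X x)^T *m P *m Y x) i j)
    = (fun x => \sum_(b < k) \sum_(a < k) P a b * (X x a i * Y x b j)).
  apply/funext => x; rewrite mxE; apply: eq_bigr => b _.
  rewrite mxE mulr_suml; apply: eq_bigr => a _; rewrite !mxE; ring.
apply: integrable_EFin_sum => b; apply: integrable_EFin_sum => a.
apply: integrable_EFin_scale.
by have [mXa iXa] := sX a i; have [mYb iYb] := sY b j; exact: integrable_mul_of_sqr.
Qed.

Lemma mx_sq_integrableD k l (F G : R -> 'M[R]_(k, l)) :
  mx_sq_integrable F -> mx_sq_integrable G -> mx_sq_integrable (fun x => F x + G x).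
Proof.
move=> sF sG i j; have [mF iF] := sF i j; have [mG iG] := sG i j.
split; under eq_fun do rewrite mxE; first exact: measurable_funD.
have i2FG := integrableD mTh (integrableZl mTh 2 iF) (integrableZl mTh 2 iG).
apply: (le_integrable mTh _ _ i2FG).
  by apply/measurable_EFinP; apply: measurable_funX; exact: measurable_funD.
move=> x _ /=; rewrite lee_fin (ger0_norm (sqr_ge0 _)).
rewrite ger0_norm ?addr_ge0 ?(mulr_ge0 _ (sqr_ge0 _)) //.
by have := sqr_ge0 (F x i j - G x i j); nra.
Qed.

Lemma mxintB k l (F G : R -> 'M[R]_(k, l)) :
  mx_integrable F -> mx_integrable G ->
  mxint nu Th (fun x => F x - G x) = mxint nu Th F - mxint nu Th G.
Proof.
move=> iF iG; apply/matrixP => i j; rewrite !mxE -RintegralB //.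
by apply: eq_Rintegral => x _; rewrite !mxE.
Qed.

Lemma mxint_mull k l p (M : 'M[R]_(k, l)) (F : R -> 'M[R]_(l, p)) :
  mx_integrable F -> mxint nu Th (fun x => M *m F x) = M *m mxint nu Th F.
Proof.
move=> iF; apply/matrixP => i j; rewrite !mxE.
under eq_Rintegral do rewrite mxE.
rewrite Rintegral_sum => [|b]; last exact: integrable_EFin_scale.
by apply: eq_bigr => b _; rewrite mxE RintegralZl.
Qed.

Lemma mxint_mulr k l p (F : R -> 'M[R]_(k, l)) (M : 'M[R]_(l, p)) :
  mx_integrable F -> mxint nu Th (fun x => F x *m M) = mxint nu Th F *m M.
Proof.
move=> iF; apply/matrixP => i j; rewrite !mxE.
under eq_Rintegral do rewrite mxE; under eq_Rintegral do under eq_bigr do rewrite mulrC.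
rewrite Rintegral_sum => [|b]; last exact: integrable_EFin_scale.
by apply: eq_bigr => b _; rewrite mxE RintegralZl // mulrC.
Qed.

Lemma sqnorm_ge0 k l (M : 'M[R]_(k, l)) : 0 <= sqnorm M.
Proof. by apply: sumr_ge0 => i _; apply: sumr_ge0 => j _; exact: sqr_ge0. Qed.

Lemma sqr_le_sqnorm k l (M : 'M[R]_(k, l)) i j : M i j ^+ 2 <= sqnorm M.
Proof.
rewrite /sqnorm (bigD1 i) //= (bigD1 j) //= -addrA lerDl.
apply: addr_ge0; first by apply: sumr_ge0 => b _; exact: sqr_ge0.
by apply: sumr_ge0 => a _; apply: sumr_ge0 => b _; exact: sqr_ge0.
Qed.

Lemma L2nu_sq_integrable (T : R) k l (r : R -> R -> 'M[R]_(k, l)) t :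
  L2nu T nu Th r -> 0 <= t <= T -> mx_sq_integrable (r t).
Proof.
move=> [mr [K rK]] tT i j; split; first exact: mr.
have msq : measurable_fun Th (fun th => sqnorm (r t th)).
  apply: measurable_sum => a; apply: measurable_sum => b.
  by apply: measurable_funX; exact: mr.
have isq : nu.-integrable Th (EFin \o fun th => sqnorm (r t th)).
  apply/integrableP; split; first exact/measurable_EFinP.
  under eq_integral => th _ do rewrite /= ger0_norm ?sqnorm_ge0 //.
  exact: le_lt_trans (rK t tT) (ltry K).
apply: (le_integrable mTh _ _ isq).
  by apply/measurable_EFinP; apply: measurable_funX; exact: mr.
move=> th _ /=; rewrite lee_fin !ger0_norm ?sqr_ge0 ?sqnorm_ge0 //.
exact: sqr_le_sqnorm.
Qed.

Local Hint Resolve mx_integrable_quad mx_integrable_mull mx_integrable_mulr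
  mx_integrableB : core.

Section Feedback.
Variables (k p q : nat) (E : R -> 'M[R]_(k, p)) (F : R -> 'M[R]_(k, q)).
Variables (P : 'M[R]_k) (X : 'M[R]_(q, p)).
Hypotheses (sE : mx_sq_integrable E) (sF : mx_sq_integrable F).

Lemma mxint_quad_feedbackl r (G : R -> 'M[R]_(k, r)) : mx_sq_integrable G ->
  mxint nu Th (fun x => (E x - F x *m X)^T *m P *m G x)
  = mxint nu Th (fun x => (E x)^T *m P *m G x)
    - X^T *m mxint nu Th (fun x => (F x)^T *m P *m G x).
Proof.
move=> sG; have -> : (fun x => (E x - F x *m X)^T *m P *m G x)
    = (fun x => (E x)^T *m P *m G x - X^T *m ((F x)^T *m P *m G x)).
  by apply/funext => x; rewrite linearB /= trmx_mul !mulmxBl !mulmxA.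
by rewrite mxintB ?mxint_mull; auto.
Qed.

Lemma mxint_quad_feedbackr r (G : R -> 'M[R]_(k, r)) : mx_sq_integrable G ->
  mxint nu Th (fun x => (G x)^T *m P *m (E x - F x *m X))
  = mxint nu Th (fun x => (G x)^T *m P *m E x)
    - mxint nu Th (fun x => (G x)^T *m P *m F x) *m X.
Proof.
move=> sG; have -> : (fun x => (G x)^T *m P *m (E x - F x *m X))
    = (fun x => (G x)^T *m P *m E x - (G x)^T *m P *m F x *m X).
  by apply/funext => x; rewrite mulmxBr mulmxA.
by rewrite mxintB ?mxint_mulr; auto.
Qed.

Lemma mxint_quad_feedback :
  mxint nu Th (fun x => (E x - F x *m X)^T *m P *m (E x - F x *m X))
  = mxint nu Th (fun x => (E x)^T *m P *m E x)
    - mxint nu Th (fun x => (E x)^T *m P *m F x) *m X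
    - X^T *m mxint nu Th (fun x => (F x)^T *m P *m E x)
    + X^T *m mxint nu Th (fun x => (F x)^T *m P *m F x) *m X.
Proof.
have -> : (fun x => (E x - F x *m X)^T *m P *m (E x - F x *m X))
    = (fun x => ((E x)^T *m P *m E x - X^T *m ((F x)^T *m P *m E x))
              - ((E x)^T *m P *m F x - X^T *m ((F x)^T *m P *m F x)) *m X).
  apply/funext => x; rewrite [(_ - _)^T]linearB /= trmx_mul.
  rewrite !(mulmxBl, mulmxBr) !mulmxA; mx_additive_ring.
rewrite !(mxintB, mxint_mulr, mxint_mull); auto.
rewrite mulmxBl; mx_additive_ring.
Qed.

End Feedback.

End MatrixIntegral.

Lemma row_mulmx_tr_le0 (R : realDomainType) k (u : 'rV[R]_k) :
  (u *m u^T) 0 0 <= 0 -> u = 0.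
Proof.
have sq_ge0 j : 0 <= u 0 j * u^T j 0 by rewrite mxE -expr2 sqr_ge0.
rewrite mxE => le0; have sum0 : \sum_j u 0 j * u^T j 0 = 0.
  by apply/le_anti; rewrite le0 sumr_ge0.
have u0 := psumr_eq0P (fun j _ => sq_ge0 j) sum0.
apply/rowP => j; rewrite [RHS]mxE; apply/eqP.
by rewrite -sqrf_eq0 expr2; have := u0 j isT; rewrite [u^T _ _]mxE => ->.
Qed.

Lemma mx_ge_scalar_unit (R : realType) k (M : 'M[R]_k) a :
  0 < a -> mx_ge_scalar M a -> M \in unitmx.
Proof.
move=> a_gt0 Ma; rewrite -row_free_unit -kermx_eq0 -submx0.
apply/row_subP => i; set u := row i (kermx M); rewrite submx0; apply/eqP.
have uM : u *m M = 0 by apply/sub_kermxP; exact: row_sub.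
apply: row_mulmx_tr_le0; rewrite -(pmulr_rle0 _ a_gt0) -oppr_ge0.
have := Ma u^T; rewrite trmxK mulmxBr mulmxBl uM mul0mx mul_mx_scalar -scalemxAl.
by rewrite !mxE sub0r.
Qed.

Section Riccati.
Variables (R : realType) (nu : {measure set R -> \bar R}) (Th : set R).
Hypothesis mTh : measurable Th.

Definition riccati_lhs k l (dP P1 P A : 'M[R]_k) (B : 'M[R]_(k, l)) (C : 'M[R]_k)
    (D : 'M[R]_(k, l)) (E : R -> 'M[R]_k) (F : R -> 'M[R]_(k, l)) (Q : 'M[R]_k)
    (S : 'M[R]_(k, l)) (Rm : 'M[R]_l) : 'M[R]_k :=
  riccati_form dP P1 P A B C D Q S Rm
    (mxint nu Th (fun th => (E th)^T *m P *m E th))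
    (mxint nu Th (fun th => (E th)^T *m P *m F th))
    (mxint nu Th (fun th => (F th)^T *m P *m E th))
    (mxint nu Th (fun th => (F th)^T *m P *m F th)).

Lemma riccati_lhs_feedback k l dP P1 P A B C D E F Q S (Rm : 'M[R]_l)
    (X : 'M[R]_(l, k)) :
  mx_sq_integrable nu Th E -> mx_sq_integrable nu Th F ->
  Rm *m X = S^T -> X^T *m Rm = S ->
  Rm + D^T *m P *m D + mxint nu Th (fun th => (F th)^T *m P *m F th) \in unitmx ->
  riccati_lhs dP P1 P (A - B *m X) B (C - D *m X) D (fun th => E th - F th *m X) F
    (Q - S *m X) 0 Rm
  = riccati_lhs dP P1 P A B C D E F Q S Rm.
Proof.
move=> sE sF RX XR uSg.
rewrite /riccati_lhs mxint_quad_feedback ?mxint_quad_feedbackl ?mxint_quad_feedbackr //.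
exact: riccati_form_feedback.
Qed.

Definition feedback_gain k l (S : 'M[R]_(k, l)) (Rm : 'M[R]_l) := invmx Rm *m S^T.

Section FeedbackGain.
Variables (k l : nat) (S : 'M[R]_(k, l)) (Rm : 'M[R]_l).
Hypotheses (uR : Rm \in unitmx) (symR : Rm^T = Rm).

Lemma mul_feedback_gain : Rm *m feedback_gain S Rm = S^T.
Proof. by rewrite mulmxA mulmxV ?mul1mx. Qed.

Lemma tr_feedback_gain_mul : (feedback_gain S Rm)^T *m Rm = S.
Proof. by rewrite trmx_mul trmxK trmx_inv symR -mulmxA mulVmx ?mulmx1. Qed.

End FeedbackGain.

Variables (n m : nat) (t : R).

Lemma ric1_lhsE (c : coef R n m) (w : weight R n m) P dP :
  ric1_lhs nu Th c w t P dP
  = riccati_lhs dP P P (cA c t) (cB c t) (cC c t) (cD c t) (cE c t) (cF c t)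
      (wQ w t) (wS w t) (wR w t).
Proof. by []. Qed.

Lemma ric2_lhsE (c : coef R n m) (w : weight R n m) P Pi dPi :
  ric2_lhs nu Th c w t P Pi dPi
  = riccati_lhs dPi Pi P (cA c t + cAb c t) (cB c t + cBb c t) (cC c t + cCb c t)
      (cD c t + cDb c t) (fun th => cE c t th + cEb c t th)
      (fun th => cF c t th + cFb c t th) (wQ w t + wQb w t) (wS w t + wSb w t)
      (wR w t + wRb w t).
Proof. by []. Qed.

Lemma ric1_lhs_coef1 (c : coef R n m) (w : weight R n m) P dP :
  ric1_lhs nu Th (ric_coef1 c w) (ric_weight1 w) t P dP
  = riccati_lhs dP P P (cA c t - cB c t *m feedback_gain (wS w t) (wR w t)) (cB c t)
      (cC c t - cD c t *m feedback_gain (wS w t) (wR w t)) (cD c t)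
      (fun th => cE c t th - cF c t th *m feedback_gain (wS w t) (wR w t)) (cF c t)
      (wQ w t - wS w t *m feedback_gain (wS w t) (wR w t)) 0 (wR w t).
Proof.
rewrite ric1_lhsE; set X := feedback_gain (wS w t) (wR w t).
have -> : cA (ric_coef1 c w) t = cA c t - cB c t *m X by rewrite /= mulmxA.
have -> : cC (ric_coef1 c w) t = cC c t - cD c t *m X by rewrite /= mulmxA.
have -> : cE (ric_coef1 c w) t = fun th => cE c t th - cF c t th *m X.
  by apply/funext => th; rewrite /= mulmxA.
by have -> : wQ (ric_weight1 w) t = wQ w t - wS w t *m X by rewrite /= mulmxA.
Qed.

Lemma ric2_lhs_coef1 (c : coef R n m) (w : weight R n m) P Pi dPi :
  ric2_lhs nu Th (ric_coef1 c w) (ric_weight1 w) t P Pi dPi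
  = riccati_lhs dPi Pi P
      (cA c t + cAb c t
       - (cB c t + cBb c t) *m feedback_gain (wS w t + wSb w t) (wR w t + wRb w t))
      (cB c t + cBb c t)
      (cC c t + cCb c t
       - (cD c t + cDb c t) *m feedback_gain (wS w t + wSb w t) (wR w t + wRb w t))
      (cD c t + cDb c t)
      (fun th => cE c t th + cEb c t th - (cF c t th + cFb c t th)
                   *m feedback_gain (wS w t + wSb w t) (wR w t + wRb w t))
      (fun th => cF c t th + cFb c t th)
      (wQ w t + wQb w t
       - (wS w t + wSb w t) *m feedback_gain (wS w t + wSb w t) (wR w t + wRb w t))
      0 (wR w t + wRb w t).
Proof.
rewrite ric2_lhsE; set X := feedback_gain (wS w t + wSb w t) (wR w t + wRb w t).
have -> : cA (ric_coef1 c w) t + cAb (ric_coef1 c w) t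
    = cA c t + cAb c t - (cB c t + cBb c t) *m X by rewrite /= subrKC mulmxA.
have -> : cC (ric_coef1 c w) t + cCb (ric_coef1 c w) t
    = cC c t + cCb c t - (cD c t + cDb c t) *m X by rewrite /= subrKC mulmxA.
have -> : (fun th => cE (ric_coef1 c w) t th + cEb (ric_coef1 c w) t th)
    = fun th => cE c t th + cEb c t th - (cF c t th + cFb c t th) *m X.
  by apply/funext => th; rewrite /= subrKC mulmxA.
have -> : wQ (ric_weight1 w) t + wQb (ric_weight1 w) t
    = wQ w t + wQb w t - (wS w t + wSb w t) *m X by rewrite /= subrKC mulmxA.
by have -> : wS (ric_weight1 w) t + wSb (ric_weight1 w) t = 0 by rewrite /= addr0.
Qed.

End Riccati.

Theorem lemma3p3 (R : realType) (T : R) (n m : nat)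
  (Th : set R) (nu : {measure set R -> \bar R})
  (c : coef R n m) (w : weight R n m) :
  0 < T -> (0 < n)%N -> (0 < m)%N ->
  levy_setting nu Th ->
  coef_adm T nu Th c -> weight_adm T w -> assumptionS T w ->
  (ric1_terminal (ric_weight1 w) = ric1_terminal w /\
   ric2_terminal (ric_weight1 w) = ric2_terminal w) /\
  (forall t, 0 <= t <= T ->
   forall P Pi dP dPi : 'M[R]_n, symmx P -> symmx Pi ->
   ricSigma0 nu Th c w t P \in unitmx -> ricSigma1 nu Th c w t P \in unitmx ->
   ric1_lhs nu Th (ric_coef1 c w) (ric_weight1 w) t P dP = ric1_lhs nu Th c w t P dP /\
   ric2_lhs nu Th (ric_coef1 c w) (ric_weight1 w) t P Pi dPi
     = ric2_lhs nu Th c w t P Pi dPi).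
Proof.
move=> _ _ _ [mTh _ _ _ _] [_ _ [L2E L2Eb L2F L2Fb]] [symw _ _ _ _].
move=> [a a_gt0 [geR _]]; split; first by [].
move=> t tT P Pi dP dPi _ _ uS0 uS1.
have [_ _ symR symRb] := symw t tT; have [geR0 geR1 _ _] := geR t tT.
have sqE := L2nu_sq_integrable mTh L2E tT; have sqEb := L2nu_sq_integrable mTh L2Eb tT.
have sqF := L2nu_sq_integrable mTh L2F tT; have sqFb := L2nu_sq_integrable mTh L2Fb tT.
have symRR : (wR w t + wRb w t)^T = wR w t + wRb w t by rewrite linearD /= symR symRb.
have uR := mx_ge_scalar_unit a_gt0 geR0; have uRR := mx_ge_scalar_unit a_gt0 geR1.
split.
  by rewrite ric1_lhs_coef1 ric1_lhsE riccati_lhs_feedback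
    ?mul_feedback_gain ?tr_feedback_gain_mul.
rewrite ric2_lhs_coef1 ric2_lhsE riccati_lhs_feedback
  ?mul_feedback_gain ?tr_feedback_gain_mul //; exact: mx_sq_integrableD.
Qed.
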